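(* Let $\mathfrak{U}$ be a symmetrically pseudo-amenable Banach algebra and $J$ a closed two-sided ideal of $\mathfrak{U}$. Suppose $J$ has an approximate identity $\{e_i\}_{i\in I}$ such that the operators $L_i:\mathfrak{U}\to J$, $a\mapsto e_ia$, and $R_i:\mathfrak{U}\to J$, $a\mapsto ae_i$, are uniformly bounded, i.e. there is $M\ge1$ with $\|e_ia\|\le M\|a\|$ and $\|ae_i\|\le M\|a\|$ for all $i\in I$, $a\in\mathfrak{U}$. Then $J$ is symmetrically pseudo-amenable.
   Context: An approximate identity for $J$ is a net $\{e_i\}$ in $J$ with $e_ia\to a$ and $ae_i\to a$ for all $a\in J$ (not necessarily bounded). For a Banach algebra $\mathfrak{U}$, $\mathfrak{U}\widehat{\otimes}\mathfrak{U}$ is the projective tensor product, with $a(b\otimes c)=ab\otimes c$, $(b\otimes c)a=b\otimes ca$, and $\pi(b\otimes c)=bc$ (extended linearly and continuously). The flip is $(b\otimes c)^{\circ}=c\otimes b$; $\mathbf{t}$ is symmetric if $\mathbf{t}^\circ=\mathbf{t}$. An approximate diagonal is a net $\{\mathbf{t}_\lambda\}$ in $\mathfrak{U}\widehat{\otimes}\mathfrak{U}$ (not necessarily bounded) with $a\mathbf{t}_\lambda-\mathbf{t}_\lambda a\to0$ and $\pi(\mathbf{t}_\lambda)a\to a$ for all $a\in\mathfrak{U}$. $\mathfrak{U}$ is symmetrically pseudo-amenable if it has an approximate diagonal consisting of symmetric elements. *)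

From mathcomp Require Import all_boot all_algebra.
From mathcomp Require Import all_classical all_reals all_analysis.
From mathcomp Require Export complex.
Import numFieldNormedType.Exports.
Set Implicit Arguments. Unset Strict Implicit. Unset Printing Implicit Defensive.
Local Open Scope ring_scope.
Local Open Scope classical_set_scope.

Section Defs.
Context {K : numFieldType} {V : normedModType K}.

Definition normed_alg_mul (mul : V -> V -> V) : Prop :=
  [/\ (forall x y z, mul (x + y) z = mul x z + mul y z),
      (forall x y z, mul z (x + y) = mul z x + mul z y),
      (forall (c : K) x y, mul (c *: x) y = c *: mul x y /\ mul x (c *: y) = c *: mul x y),
      (forall x y z, mul (mul x y) z = mul x (mul y z)) &
      (forall x y, `|mul x y| <= `|x| * `|y|)].

Definition closed_ideal (mul : V -> V -> V) (J : set V) : Prop :=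
  [/\ closed J, J 0, (forall x y, J x -> J y -> J (x + y)),
      (forall (c : K) x, J x -> J (c *: x)) &
      (forall a x, J x -> J (mul a x) /\ J (mul x a))].

Definition directed {I : Type} (le : I -> I -> Prop) : Prop :=
  [/\ (forall i, le i i), (forall i j k, le i j -> le j k -> le i k),
      (exists i : I, True) & (forall i j, exists k, le i k /\ le j k)].

Definition net_cvg {I : Type} (le : I -> I -> Prop) (x : I -> V) (l : V) : Prop :=
  forall e : K, 0 < e -> exists i0, forall i, le i0 i -> `|x i - l| < e.

(* Elements of the completed projective tensor product A (^) A, where A is a
   closed subalgebra of V carrying the restricted norm, are represented as
   sums  sum_n a_n (x) b_n  with a_n, b_n in A and sum_n |a_n| |b_n| < oo. *)
Definition tens := ((nat -> V) * (nat -> V))%type.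

Definition tens_on (A : set V) (t : tens) : Prop :=
  (forall n, A (t.1 n) /\ A (t.2 n)) /\
  cvgn (series (fun n => (`|t.1 n| * `|t.2 n| : K^o))).

(* bounded bilinear forms on A x A of norm <= 1; these form the unit ball of
   the dual space (A (^) A)^* *)
Definition bilin_le1 (A : set V) (phi : V -> V -> K) : Prop :=
  [/\ (forall x y z, A x -> A y -> A z ->
         phi (x + y) z = phi x z + phi y z /\ phi z (x + y) = phi z x + phi z y),
      (forall (c : K) x y, A x -> A y ->
         phi (c *: x) y = c * phi x y /\ phi x (c *: y) = c * phi x y) &
      (forall x y, A x -> A y -> `|phi x y| <= `|x| * `|y|)].

Definition tpair (phi : V -> V -> K) (t : tens) : K :=
  limn (series (fun n => (phi (t.1 n) (t.2 n) : K^o))).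

Definition tlact (mul : V -> V -> V) (a : V) (t : tens) : tens :=
  (fun n => mul a (t.1 n), t.2).
Definition tract (mul : V -> V -> V) (t : tens) (a : V) : tens :=
  (t.1, fun n => mul (t.2 n) a).
Definition tflip (t : tens) : tens := (t.2, t.1).
Definition tpi (mul : V -> V -> V) (t : tens) : V :=
  limn (series (fun n => mul (t.1 n) (t.2 n))).

(* t and s define the same element of A (^) A *)
Definition teq (A : set V) (t s : tens) : Prop :=
  forall phi, bilin_le1 A phi -> tpair phi t = tpair phi s.

(* The closed subalgebra A of (V, mul) (with the restricted norm) is
   symmetrically pseudo-amenable: it has an approximate diagonal (a net, not
   necessarily bounded) consisting of symmetric elements of A (^) A.
   The projective norm ||t - s||_pi is  sup_{phi} |<phi,t> - <phi,s>|  over the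
   unit ball of bounded bilinear forms on A x A, so "||..||_pi -> 0" is
   expressed by the uniform bound below. *)
Definition sym_pseudo_amenable (mul : V -> V -> V) (A : set V) : Prop :=
  exists (I : Type) (le : I -> I -> Prop) (t : I -> tens),
    [/\ directed le,
        (forall i, tens_on A (t i)),
        (forall i, teq A (tflip (t i)) (t i)),
        (forall a, A a -> forall e : K, 0 < e -> exists i0, forall i, le i0 i ->
            forall phi, bilin_le1 A phi ->
              `|tpair phi (tlact mul a (t i)) - tpair phi (tract mul (t i) a)| <= e) &
        (forall a, A a -> net_cvg le (fun i => mul (tpi mul (t i)) a) a)].

End Defs.

(* Compress a symmetric approximate diagonal m of U into J (^) J by multiplying
   both legs on the left by an element e of the approximate identity.  Since a e m_1 = (a e - e a) m_1
   + e a m_1, its commutator with a differs from M^2 times the commutator of m,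
   paired against the form (x, y) |-> phi (e x, e y) / M^2 (which the uniform
   bound M keeps in the unit ball), by at most M |a e - e a| sum_n |m_1||m_2|.
   Likewise pi (e m_1 (x) e m_2) a differs from e pi(m) a by
   e sum_n m_1 (e m_2 a - m_2 a).  For a in J, a e - e a, e pi(m) a - pi(m) a
   and (by dominated convergence) this series all tend to 0 along the
   approximate identity.  Hence, choosing first m and then e, every finite
   subset of J and every tolerance is met, and these choices, indexed by
   (finite set, tolerance), form the required net. *)

From HB Require Import structures.
From mathcomp Require Import all_boot all_order all_algebra.
From mathcomp Require Import all_classical all_reals all_analysis.
From mathcomp Require Import complex ring.
Import numFieldNormedType.Exports.
Import Order.TTheory GRing.Theory Num.Theory.
Local Open Scope ring_scope.
Local Open Scope classical_set_scope.

Set Implicit Arguments. Unset Strict Implicit. Unset Printing Implicit Defensive.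

Section complex_complete.
Variable R : realType.
Local Notation C := R[i].
Local Notation Re := (@complex.Re R).
Local Notation Im := (@complex.Im R).
Local Open Scope complex_scope.

Lemma normc_i : `|'i| = 1 :> C.
Proof. by rewrite normc_def /= expr0n expr1n add0r sqrtr1. Qed.

Lemma normc_ge_Im (z : C) : `|Im z|%:C <= `|z|.
Proof.
by have := normc_ge_Re (z * 'i); rewrite ReiNIm normrN normrM normc_i mulr1.
Qed.

Lemma normc_le_ReIm (z : C) : `|z| <= (`|Re z| + `|Im z|)%:C.
Proof.
rewrite {1}[z]complexE rmorphD; apply: le_trans (ler_normD _ _) _.
by rewrite normrM normc_i mul1r !normc_def /= !expr0n !addr0 !sqrtr_sqr.
Qed.

Lemma complex_cauchy_cvg (F : set_system C^o) : ProperFilter F -> cauchy F -> cvg F.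
Proof.
move=> FF /cauchyP Fc.
have cvg_part (f : C -> R) : {morph f : x y / x - y} -> (forall z, `|f z|%:C <= `|z|) ->
    cvg (f @ F).
  move=> fB f_le; apply/cauchy_cvgP/cauchy_exP => e e_gt0.
  have [x Fx] : exists x, F (ball x e%:C) by apply: Fc; rewrite ltcR.
  exists (f x); apply: (@filterS _ F _ (ball x e%:C)) Fx => z.
  by rewrite -!ball_normE /ball_ /= -ltcR -fB; apply: le_lt_trans.
have /cvgrPdist_lt ReF := cvg_part _ (@raddfB _ _ _) (@normc_ge_Re R).
have /cvgrPdist_lt ImF := cvg_part _ (@raddfB _ _ _) normc_ge_Im.
apply/cvg_ex; exists (lim (Re @ F) +i* lim (Im @ F)); apply/cvgrPdist_lt => e.
case: e => a b; rewrite ltcE => /andP[/eqP /= -> /= a_gt0].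
near=> z; apply: le_lt_trans (normc_le_ReIm _) _.
rewrite ltcR (splitr a) !raddfB /=.
by apply: ltrD; [near: z; apply: ReF | near: z; apply: ImF]; rewrite divr_gt0.
Unshelve. all: by end_near. Qed.

End complex_complete.

(* Completeness of C makes the pairings sum_n phi (a_n, b_n) converge.  HB
   registers no new instance on R[i]^o itself, whose structures come from a
   generic instance on GRing.regular, hence the alias. *)
Definition complete_complex (R : realType) := R[i]^o.
HB.instance Definition _ (R : realType) := NormedModule.on (complete_complex R).
HB.instance Definition _ (R : realType) :=
  Uniform_isComplete.Build (complete_complex R) (@complex_cauchy_cvg R).

Section series_comparison.
Context {K : numFieldType}.

(* The order of K need not be closed, but 0 <= x iff `|x| = x, which passes to
   the limit. *)
Lemma limn_ge0 (s : K^o^nat) : cvgn s -> (\forall n \near \oo, 0 <= s n) -> 0 <= limn s.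
Proof.
move=> s_cvg s_ge0; suff -> : limn s = `|limn s| by [].
have norm_s_cvg : (fun n => `|s n|) @ \oo --> limn s.
  apply: cvg_trans s_cvg; apply: near_eq_cvg.
  by near=> n; rewrite ger0_norm //; near: n.
by rewrite -[LHS](cvg_lim _ norm_s_cvg) ?lim_norm.
Unshelve. all: by end_near. Qed.

Lemma cvg_series_le_norm {V : completeNormedModType K} (u : V^nat) (r : K^o^nat) (c : K) :
  (forall n, `|u n| <= c * r n) -> cvgn (series r) -> cvgn (series u).
Proof.
move=> u_le r_cvg; have cr_cvg : cvgn (series (c *: r)) by exact: is_cvg_seriesZ.
have cr_cauchy := (cauchy_seriesP (c *: r)).1 (cvg_cauchy _ cr_cvg).
apply/cauchy_cvgP/(cauchy_seriesP u).2 => e /cr_cauchy; apply: filterS => -[m n] /=.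
apply: le_lt_trans; apply: le_trans (ler_norm_sum _ _ _) _.
apply: le_trans (ler_sum _ (fun k _ => u_le k)) _.
by rewrite ger0_norm // sumr_ge0 // => k _; apply: le_trans (u_le k).
Qed.

Lemma ler_norm_lim_series_sub {V : normedModType K} (u : V^nat) (r : K^o^nat) N :
  (forall n, `|u n| <= r n) -> cvgn (series u) -> cvgn (series r) ->
  `|limn (series u) - series u N| <= limn (series r) - series r N.
Proof.
move=> u_le u_cvg r_cvg; rewrite -subr_ge0.
have gap_cvg : (fun n => (series r n - series r N) - `|series u n - series u N|) @ \oo
    --> (limn (series r) - series r N) - `|limn (series u) - series u N|.
  apply: cvgB; first by apply: cvgB => //; exact: cvg_cst.
  by apply: cvg_norm; apply: cvgB => //; exact: cvg_cst.
rewrite -(cvg_lim _ gap_cvg) //; apply: limn_ge0; first exact: cvgP gap_cvg.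
near=> n; have Nn : (N <= n)%N by near: n; exists N.
rewrite subr_ge0 !sub_series_geq //; apply: le_trans (ler_norm_sum _ _ _) _.
by apply: ler_sum => k _; apply: u_le.
Unshelve. all: by end_near. Qed.

Lemma ler_norm_lim_series {V : normedModType K} (u : V^nat) (r : K^o^nat) (c : K) :
  (forall n, `|u n| <= c * r n) -> cvgn (series u) -> cvgn (series r) ->
  `|limn (series u)| <= c * limn (series r).
Proof.
move=> u_le u_cvg r_cvg; have cr_cvg : cvgn (series (c *: r)) by exact: is_cvg_seriesZ.
have := @ler_norm_lim_series_sub _ u (c *: r) 0 u_le u_cvg cr_cvg.
by rewrite lim_seriesZ // /series /= !big_geq // !subr0.
Qed.

End series_comparison.

Section bounded_maps.
Context {K : numFieldType} {V W : normedModType K}.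

Lemma cvg0_bounded {T} {F : set_system T} {FF : Filter F} (f : V -> W) (c : K) (y : T -> V) :
  (forall x, `|f x| <= c * `|x|) -> y @ F --> 0 -> f \o y @ F --> 0.
Proof.
move=> f_le y_cvg0; have /cvgr0Pnorm_lt small : (fun t => c * `|y t|) @ F --> (0 : K^o).
  rewrite -(mulr0 c) -[X in c * X](normr0 V).
  by apply: cvgM; [exact: cvg_cst | exact: cvg_norm].
apply/cvgr0Pnorm_lt => e /small; apply: filterS => t /=; apply: le_lt_trans.
by rewrite ger0_norm // (le_trans (normr_ge0 _) (f_le _)).
Qed.

Lemma cvg_series_map (f : V -> W) (c : K) (u : V^nat) :
  {morph f : x y / x + y} -> (forall x, `|f x| <= c * `|x|) -> cvgn (series u) ->
  series (f \o u) @ \oo --> f (limn (series u)).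
Proof.
move=> fD f_le u_cvg; have f0 : f 0 = 0.
  by apply: (@addrI _ (f 0)); rewrite -fD !addr0.
have fB x y : f (x - y) = f x - f y.
  by apply: (@addIr _ (f y)); rewrite -fD !subrK.
have -> : series (f \o u) = f \o series u.
  by apply/funext => n; rewrite /series /= (big_morph f fD f0).
apply/subr_cvg0; have -> : (fun n => f (series u n) - f (limn (series u))) =
    f \o (fun n => series u n - limn (series u)).
  by apply/funext => n; rewrite /= fB.
by apply: (cvg0_bounded f_le); apply/subr_cvg0.
Qed.

Lemma cvg_seriesB (u v : V^nat) : cvgn (series u) -> cvgn (series v) ->
  series (fun n => u n - v n) @ \oo --> limn (series u) - limn (series v).
Proof.
move=> u_cvg v_cvg; have -> : series (fun n => u n - v n) = series u - series v.
  by apply/funext => n; rewrite /series /= sumrB.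
exact: cvgB.
Qed.

Lemma cvg_seriesD (u v : V^nat) : cvgn (series u) -> cvgn (series v) ->
  series (fun n => u n + v n) @ \oo --> limn (series u) + limn (series v).
Proof.
move=> u_cvg v_cvg; have -> : series (fun n => u n + v n) = series u + series v.
  by apply/funext => n; rewrite /series /= big_split.
exact: cvgD.
Qed.

End bounded_maps.

Lemma cvg_lim_series_dominated {K : numFieldType} {V : completeNormedModType K}
    {T} (G : set_system T) {FG : Filter G} (w : T -> V^nat) (r : K^o^nat) :
  (forall t n, `|w t n| <= r n) -> cvgn (series r) -> (forall n, w^~ n @ G --> 0) ->
  (fun t => limn (series (w t))) @ G --> 0.
Proof.
move=> w_le r_cvg w_cvg0; apply/cvgr0Pnorm_lt => e e_gt0.
have e2_gt0 : 0 < e / 2 by rewrite divr_gt0.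
have w_cvg t : cvgn (series (w t)).
  by apply: (@cvg_series_le_norm _ _ _ r 1) => // n; rewrite mul1r.
have /cvgrPdist_lt/(_ _ e2_gt0) r_tail := r_cvg.
near \oo => N.
have head_cvg : (fun t => series (w t) N) @ G --> 0.
  have := @cvg_big _ _ +%R 0 predT add_continuous _ G (index_iota 0 N)
    (fun k t => w t k) (fun=> 0) FG.
  by rewrite big1 //; apply.
move/cvgr0Pnorm_lt/(_ _ e2_gt0): head_cvg; apply: filterS => t head_small.
have tail_le := @ler_norm_lim_series_sub _ _ (w t) r N (w_le t) (w_cvg t) r_cvg.
rewrite -(subrK (series (w t) N) (limn _)) (splitr e).
apply: le_lt_trans (ler_normD _ _) _; rewrite addrC ltr_leD //.
apply: (le_trans tail_le); rewrite -[leLHS]ger0_norm; last first.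
  exact: le_trans (normr_ge0 _) tail_le.
by apply: ltW; near: N.
Unshelve. all: by end_near. Qed.

Lemma near_all_in {T} {F : set_system T} {FF : Filter F} {A : eqType} (s : seq A)
    (P : A -> T -> Prop) :
  (forall a, a \in s -> \forall x \near F, P a x) ->
  \forall x \near F, forall a, a \in s -> P a x.
Proof.
elim: s => [|b s IHs] Ps; first by apply: nearW => x a; rewrite in_nil.
have Pb := Ps b (mem_head _ _).
have {IHs}Ps' := IHs (fun a sa => Ps a (mem_behead (s := b :: s) sa)).
apply: filterS (filterI Pb Ps') => x [Pbx Psx] a /predU1P[-> //|].
exact: Psx.
Qed.

Section tails.
Context {I : Type} (le : I -> I -> Prop).

Definition tails : set_system I := filter_from setT (fun i0 => [set i | le i0 i]).

Lemma tails_proper : directed le -> ProperFilter tails.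
Proof.
case=> le_refl le_tr I_inhab le_ub; apply: filter_from_proper; last first.
  by move=> i _; exists i; exact: le_refl.
apply: filter_fromT_filter => // i j; have [k [ik jk]] := le_ub i j.
by exists k => l /= kl; split; apply: le_tr kl.
Qed.

Lemma near_tails (P : I -> Prop) :
  (exists i0, forall i, le i0 i -> P i) -> \forall i \near tails, P i.
Proof. by case=> i0 P_i0; exists i0. Qed.

Lemma net_cvg_tails {K : numFieldType} {V : normedModType K} (x : I -> V) (l : V) :
  directed le -> net_cvg le x l -> x @ tails --> l.
Proof.
move=> /tails_proper tailsF x_cvg; apply/cvgrPdistC_lt => e /x_cvg.
exact: near_tails.
Qed.

End tails.

Lemma sym_pseudo_amenable_of_finite {K : numFieldType} {V : normedModType K}
    (mul : V -> V -> V) (A : set V) :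
  (forall (F : seq V) (eps : K), 0 < eps -> exists t,
     [/\ tens_on A t, teq A (tflip t) t &
       forall a, a \in F -> A a ->
         (forall phi, bilin_le1 A phi ->
            `|tpair phi (tlact mul a t) - tpair phi (tract mul t a)| <= eps) /\
         `|mul (tpi mul t) a - a| < eps]) ->
  sym_pseudo_amenable mul A.
Proof.
move=> approx.
have [t tP] := choice (fun p : seq V * {posnum K} => approx p.1 p.2%:num (gt0 p.2)).
pose le (p q : seq V * {posnum K}) := {subset p.1 <= q.1} /\ q.2%:num <= p.2%:num.
have beyond a (e : K) : 0 < e -> exists p0, forall p, le p0 p ->
    a \in p.1 /\ p.2%:num <= e.
  by move=> e_gt0; exists ([:: a], PosNum e_gt0) => p [/(_ a (mem_head _ _)) ap ep].
exists (seq V * {posnum K})%type, le, t; split.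
- split.
  + by move=> p; split.
  + move=> p q r [pq qp] [qr rq]; split; last exact: le_trans rq qp.
    by move=> x /pq /qr.
  + by exists ([::], 1%:pos).
  + move=> p q; have [pq|/ltW qp] := real_leP (gtr0_real (gt0 p.2)) (gtr0_real (gt0 q.2)).
    * exists (p.1 ++ q.1, p.2).
      by split; split=> //= x xF; rewrite mem_cat xF ?orbT.
    * exists (p.1 ++ q.1, q.2).
      by split; split=> //= x xF; rewrite mem_cat xF ?orbT.
- by move=> p; case: (tP p).
- by move=> p; case: (tP p).
- move=> a Aa e /(beyond a) [p0 p0P]; exists p0 => p /p0P[ap pe] phi phiA.
  by case: (tP p) => _ _ /(_ a ap Aa) [/(_ phi phiA) /le_trans -> //].
- move=> a Aa e /(beyond a) [p0 p0P]; exists p0 => p /p0P[ap pe].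
  by case: (tP p) => _ _ /(_ a ap Aa) [_ /lt_le_trans ->].
Qed.

Section normed_algebra.
Context {K : numFieldType} {V : normedModType K} (mul : V -> V -> V).
Hypothesis mulP : normed_alg_mul mul.

Lemma amulDl x y z : mul (x + y) z = mul x z + mul y z.
Proof. by case: mulP. Qed.

Lemma amulDr x y z : mul z (x + y) = mul z x + mul z y.
Proof. by case: mulP. Qed.

Lemma amulZr (c : K) x y : mul x (c *: y) = c *: mul x y.
Proof. by case: mulP => _ _ /(_ c x y)[]. Qed.

Lemma amulA x y z : mul (mul x y) z = mul x (mul y z).
Proof. by case: mulP. Qed.

Lemma norm_amul_le x y : `|mul x y| <= `|x| * `|y|.
Proof. by case: mulP. Qed.

Lemma amulBl x y z : mul (x - y) z = mul x z - mul y z.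
Proof. by apply: (@addIr _ (mul y z)); rewrite -amulDl !subrK. Qed.

Lemma amulBr x y z : mul z (x - y) = mul z x - mul z y.
Proof. by apply: (@addIr _ (mul z y)); rewrite -amulDr !subrK. Qed.

Lemma amul_series_cvgl a (u : V^nat) : cvgn (series u) ->
  series (fun n => mul a (u n)) @ \oo --> mul a (limn (series u)).
Proof.
by apply: (@cvg_series_map _ _ _ (mul a) `|a|) => [x y|x]; rewrite ?amulDr ?norm_amul_le.
Qed.

Lemma amul_series_cvgr a (u : V^nat) : cvgn (series u) ->
  series (fun n => mul (u n) a) @ \oo --> mul (limn (series u)) a.
Proof.
apply: (@cvg_series_map _ _ _ (mul^~ a) `|a|) => [x y|x]; first exact: amulDl.
by rewrite mulrC norm_amul_le.
Qed.

End normed_algebra.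

Section ideal.
Context {K : numFieldType} {V : normedModType K} (mul : V -> V -> V) (J : set V).
Hypothesis JP : closed_ideal mul J.

Lemma ideal_mull a x : J x -> J (mul a x).
Proof. by case: JP => _ _ _ _ /(_ a x) JM /JM[]. Qed.

Lemma ideal_mulr a x : J x -> J (mul x a).
Proof. by case: JP => _ _ _ _ /(_ a x) JM /JM[]. Qed.

Lemma ideal_sub x y : J x -> J y -> J (x - y).
Proof.
case: JP => _ _ JD JZ _ Jx Jy; apply: JD => //.
by rewrite -scaleN1r; apply: JZ.
Qed.

End ideal.

Section tensors.
Variables (R : realType) (U : completeNormedModType R[i]) (mul : U -> U -> U).
Hypothesis mulP : normed_alg_mul mul.
Local Notation C := R[i].
Local Notation tensU := (@tens C U).

Definition tweight (t : tensU) : C^o^nat := fun n => `|t.1 n| * `|t.2 n|.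

Lemma tweight_ge0 t n : 0 <= tweight t n.
Proof. by rewrite mulr_ge0. Qed.

Lemma lim_tweight_ge0 (t : tensU) : tens_on setT t -> 0 <= limn (series (tweight t)).
Proof.
case=> _ t_cvg; apply: limn_ge0 t_cvg _.
by apply: nearW => n; apply: sumr_ge0 => k _; apply: tweight_ge0.
Qed.

Lemma cvg_series_scalar (z r : C^o^nat) (c : C) :
  (forall n, `|z n| <= c * r n) -> cvgn (series r) -> cvgn (series z).
Proof.
move=> z_le r_cvg.
exact: (@cvg_series_le_norm _ (complete_complex R) z r c z_le r_cvg).
Qed.

Lemma cvg_tpair A phi (t : tensU) : bilin_le1 A phi -> tens_on A t ->
  cvgn (series (fun n => phi (t.1 n) (t.2 n) : C^o)).
Proof.
case=> _ _ phi_le [tA t_cvg]; apply: (@cvg_series_scalar _ (tweight t) 1) => // n.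
by have [At1 At2] := tA n; rewrite mul1r; exact: (phi_le _ _ At1 At2).
Qed.

Lemma tens_on_tflip A (t : tensU) : tens_on A t -> tens_on A (tflip t).
Proof.
case=> tA t_cvg; split => [n|]; first by have [] := tA n.
apply: (@cvg_series_scalar _ (tweight t) 1) => // n.
by rewrite mul1r ger0_norm ?mulr_ge0 // mulrC.
Qed.

Lemma tens_on_tlact a (t : tensU) : tens_on setT t -> tens_on setT (tlact mul a t).
Proof.
case=> _ t_cvg; split => [//|]; apply: (@cvg_series_scalar _ (tweight t) `|a|) => // n.
by rewrite ger0_norm ?mulr_ge0 // mulrA ler_wpM2r // (norm_amul_le mulP).
Qed.

Lemma tens_on_tract a (t : tensU) : tens_on setT t -> tens_on setT (tract mul t a).
Proof.
case=> _ t_cvg; split => [//|]; apply: (@cvg_series_scalar _ (tweight t) `|a|) => // n.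
by rewrite ger0_norm ?mulr_ge0 // mulrCA ler_wpM2l // mulrC (norm_amul_le mulP).
Qed.

Lemma tpi_amulr A (t : tensU) a : tens_on A t ->
  mul (tpi mul t) a = limn (series (fun n => mul (t.1 n) (mul (t.2 n) a))).
Proof.
case=> _ t_cvg; pose p n := mul (t.1 n) (t.2 n).
have p_le n : `|p n| <= 1 * tweight t n by rewrite mul1r (norm_amul_le mulP).
have p_cvg := cvg_series_le_norm p_le t_cvg.
rewrite -(cvg_lim (@norm_hausdorff _ _) (amul_series_cvgr mulP (a := a) p_cvg)).
by congr (limn (series _)); apply/funext => n; rewrite /p (amulA mulP).
Qed.

End tensors.

Section compression.
Variables (R : realType) (U : completeNormedModType R[i]) (mul : U -> U -> U).
Local Notation C := R[i].
Local Notation tensU := (@tens C U).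

Definition tlmul2 (e : U) (t : tensU) : tensU :=
  (fun n => mul e (t.1 n), fun n => mul e (t.2 n)).

Definition lmul2_form (phi : U -> U -> C) (e : U) (M : C) (x y : U) : C :=
  (M ^+ 2)^-1 * phi (mul e x) (mul e y).

Definition lmul_defect (t : tensU) (a e : U) : U :=
  limn (series (fun n => mul (t.1 n) (mul e (mul (t.2 n) a) - mul (t.2 n) a))).

Definition approx_error (M : C) (t : tensU) (a e : U) : C :=
  M * limn (series (tweight t)) * `|mul a e - mul e a| + M * `|lmul_defect t a e|
  + `|mul e (mul (tpi mul t) a) - mul (tpi mul t) a|.

Variables (J : set U) (e : U) (M : C).
Hypotheses (mulP : normed_alg_mul mul) (JP : closed_ideal mul J).
Hypotheses (Je : J e) (M_gt0 : 0 < M) (eM : forall x, `|mul e x| <= M * `|x|).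

Lemma J_lmul x : J (mul e x).
Proof. exact: (ideal_mulr JP). Qed.

Lemma norm_lmul2_le x y : `|mul e x| * `|mul e y| <= M ^+ 2 * (`|x| * `|y|).
Proof. by rewrite expr2 mulrACA ler_pM. Qed.

Lemma tens_on_tlmul2 t : tens_on setT t -> tens_on J (tlmul2 e t).
Proof.
case=> _ t_cvg; split => [n|]; first by split; apply: J_lmul.
apply: (@cvg_series_scalar _ _ (tweight t) (M ^+ 2)) => // n.
by rewrite ger0_norm ?mulr_ge0 //; exact: norm_lmul2_le.
Qed.

Lemma bilin_le1_lmul2_form phi : bilin_le1 J phi -> bilin_le1 setT (lmul2_form phi e M).
Proof.
case=> phiD phiZ phi_le; split.
- move=> x y z _ _ _; rewrite /lmul2_form !(amulDr mulP).
  by have [-> ->] := phiD _ _ _ (J_lmul x) (J_lmul y) (J_lmul z); rewrite !mulrDr.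
- move=> c x y _ _; rewrite /lmul2_form !(amulZr mulP).
  by have [-> ->] := phiZ c _ _ (J_lmul x) (J_lmul y); split; rewrite mulrCA.
- move=> x y _ _; have M2_gt0 : 0 < M ^+ 2 by rewrite exprn_gt0.
  rewrite /lmul2_form normrM normfV (gtr0_norm M2_gt0) mulrC ler_pdivrMr // mulrC.
  exact: le_trans (phi_le _ _ (J_lmul x) (J_lmul y)) (norm_lmul2_le x y).
Qed.

Lemma tpair_tlmul2 phi t : bilin_le1 J phi -> tens_on setT t ->
  tpair phi (tlmul2 e t) = M ^+ 2 * tpair (lmul2_form phi e M) t.
Proof.
move=> phiJ t_on; have psi_cvg := cvg_tpair (bilin_le1_lmul2_form phiJ) t_on.
have phiE : (fun n => phi (mul e (t.1 n)) (mul e (t.2 n)) : C^o) =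
    (fun n => M ^+ 2 * lmul2_form phi e M (t.1 n) (t.2 n)).
  apply/funext => n; rewrite /lmul2_form mulrA mulfV ?mul1r //.
  by rewrite expf_neq0 // gt_eqF.
rewrite -[LHS]/(limn (series (fun n => phi (mul e (t.1 n)) (mul e (t.2 n)) : C^o))).
rewrite phiE; apply: cvg_lim; first exact: norm_hausdorff.
apply: (cvg_series_map (c := `|M ^+ 2|)) psi_cvg => [x y|x].
  by rewrite mulrDr.
by rewrite normrM.
Qed.

Lemma teq_tflip_tlmul2 t : tens_on setT t -> teq setT (tflip t) t ->
  teq J (tflip (tlmul2 e t)) (tlmul2 e t).
Proof.
move=> t_on t_sym phi phiJ; have psiU := bilin_le1_lmul2_form phiJ.
rewrite -[tflip _]/(tlmul2 e (tflip t)) (tpair_tlmul2 phiJ (tens_on_tflip t_on)).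
by rewrite (tpair_tlmul2 phiJ t_on) (t_sym _ psiU).
Qed.

Lemma amul_lmul_comm a x : mul a (mul e x) = mul (mul a e - mul e a) x + mul e (mul a x).
Proof. by rewrite (amulBl mulP) !(amulA mulP) subrK. Qed.

Lemma tlmul2_diag_le phi t a : bilin_le1 J phi -> tens_on setT t -> J a ->
  `|tpair phi (tlact mul a (tlmul2 e t)) - tpair phi (tract mul (tlmul2 e t) a)|
  <= M * limn (series (tweight t)) * `|mul a e - mul e a|
     + M ^+ 2 * `|tpair (lmul2_form phi e M) (tlact mul a t)
                  - tpair (lmul2_form phi e M) (tract mul t a)|.
Proof.
move=> phiJ t_on Ja; have [phiD _ phi_le] := phiJ; have t_cvg := t_on.2.
set d := mul a e - mul e a.
have Jd : J d by apply: (ideal_sub JP); [apply: (ideal_mull JP) | apply: (ideal_mulr JP)].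
have Jdx x : J (mul d x) by apply: (ideal_mulr JP).
have tractE : tract mul (tlmul2 e t) a = tlmul2 e (tract mul t a).
  by congr pair; apply/funext => n; rewrite /= (amulA mulP).
pose D n : C^o := phi (mul d (t.1 n)) (mul e (t.2 n)).
have D_le n : `|D n| <= `|d| * M * tweight t n.
  apply: le_trans (phi_le _ _ (Jdx _) (J_lmul _)) _.
  by rewrite mulrACA ler_pM // (norm_amul_le mulP).
have D_cvg := cvg_series_scalar D_le t_cvg.
have P_cvg := cvg_tpair phiJ (tens_on_tlmul2 (tens_on_tlact mulP a t_on)).
have lactE : tpair phi (tlact mul a (tlmul2 e t)) =
    limn (series D) + tpair phi (tlmul2 e (tlact mul a t)).
  rewrite -(cvg_lim (@norm_hausdorff _ _) (cvg_seriesD D_cvg P_cvg)).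
  rewrite -[LHS]/(limn (series (fun n => phi (mul a (mul e (t.1 n))) (mul e (t.2 n)) : C^o))).
  congr (limn (series _)); apply/funext => n.
  rewrite amul_lmul_comm; apply: (phiD _ _ _ (Jdx _) (J_lmul _) (J_lmul _)).1.
rewrite lactE tractE (tpair_tlmul2 phiJ (tens_on_tlact mulP a t_on)).
rewrite (tpair_tlmul2 phiJ (tens_on_tract mulP a t_on)) -addrA -mulrBr.
apply: le_trans (ler_normD _ _) _; apply: lerD.
  by rewrite mulrC mulrA; apply: (ler_norm_lim_series D_le D_cvg t_cvg).
by rewrite normrM ger0_norm // exprn_ge0 // ltW.
Qed.

Lemma tlmul2_tpi_le t a : tens_on setT t ->
  `|mul (tpi mul (tlmul2 e t)) a - a|
  <= M * `|lmul_defect t a e| + `|mul e (mul (tpi mul t) a) - mul (tpi mul t) a|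
     + `|mul (tpi mul t) a - a|.
Proof.
move=> t_on; have t_cvg := t_on.2.
pose w n := mul (t.1 n) (mul e (mul (t.2 n) a)).
pose z n := mul (t.1 n) (mul (t.2 n) a).
have w_le n : `|w n| <= M * `|a| * tweight t n.
  have -> : M * `|a| * tweight t n = `|t.1 n| * (M * (`|t.2 n| * `|a|)).
    by rewrite /tweight; ring.
  apply: le_trans (norm_amul_le mulP _ _) _; apply: ler_wpM2l => //.
  by apply: le_trans (eM _) _; rewrite ler_wpM2l ?(ltW M_gt0) // (norm_amul_le mulP).
have z_le n : `|z n| <= `|a| * tweight t n.
  apply: le_trans (norm_amul_le mulP _ _) _; rewrite mulrCA ler_wpM2l //.
  by rewrite mulrC (norm_amul_le mulP).
have w_cvg := cvg_series_le_norm w_le t_cvg; have z_cvg := cvg_series_le_norm z_le t_cvg.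
have tpiE : mul (tpi mul t) a = limn (series z) := tpi_amulr mulP a t_on.
have tlmul2E : mul (tpi mul (tlmul2 e t)) a = mul e (limn (series w)).
  rewrite (tpi_amulr mulP a (tens_on_tlmul2 t_on)).
  rewrite -(cvg_lim (@norm_hausdorff _ _) (amul_series_cvgl mulP (a := e) w_cvg)).
  by congr (limn (series _)); apply/funext => n; rewrite /w !(amulA mulP).
have defectE : lmul_defect t a e = limn (series w) - limn (series z).
  rewrite -(cvg_lim (@norm_hausdorff _ _) (cvg_seriesB w_cvg z_cvg)).
  by congr (limn (series _)); apply/funext => n; rewrite /w /z (amulBr mulP).
rewrite tlmul2E tpiE.
have -> : mul e (limn (series w)) - a = mul e (lmul_defect t a e)
    + (mul e (limn (series z)) - limn (series z)) + (limn (series z) - a).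
  by rewrite defectE (amulBr mulP) !addrA !subrK.
apply: le_trans (ler_normD _ _) _; apply: lerD => //.
by apply: le_trans (ler_normD _ _) _; apply: lerD.
Qed.

Lemma approx_error_ge0 t a : tens_on setT t -> 0 <= approx_error M t a e.
Proof.
move=> t_on; have S_ge0 := lim_tweight_ge0 t_on.
by rewrite /approx_error !addr_ge0 ?mulr_ge0 ?(ltW M_gt0).
Qed.

Lemma tlmul2_approx_le t a : tens_on setT t -> J a ->
  (forall phi, bilin_le1 J phi ->
    `|tpair phi (tlact mul a (tlmul2 e t)) - tpair phi (tract mul (tlmul2 e t) a)|
    <= approx_error M t a e
       + M ^+ 2 * `|tpair (lmul2_form phi e M) (tlact mul a t)
                    - tpair (lmul2_form phi e M) (tract mul t a)|) /\
  `|mul (tpi mul (tlmul2 e t)) a - a| <= approx_error M t a e + `|mul (tpi mul t) a - a|.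
Proof.
move=> t_on Ja; have S_ge0 := lim_tweight_ge0 t_on; split.
  move=> phi phiJ; apply: le_trans (tlmul2_diag_le phiJ t_on Ja) _.
  by rewrite lerD2r /approx_error -addrA lerDl !addr_ge0 ?mulr_ge0 ?(ltW M_gt0).
apply: le_trans (tlmul2_tpi_le a t_on) _.
by rewrite lerD2r /approx_error -addrA lerDr !mulr_ge0 ?(ltW M_gt0).
Qed.

End compression.

Section approximate_identity.
Variables (R : realType) (U : completeNormedModType R[i]) (mul : U -> U -> U).
Local Notation C := R[i].

Variables (J : set U) (I : Type) (le : I -> I -> Prop) (ee : I -> U) (M : C).
Hypotheses (mulP : normed_alg_mul mul) (JP : closed_ideal mul J) (dirI : directed le).
Hypotheses (e_unit : forall a, J a -> net_cvg le (fun i => mul (ee i) a) a /\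
                                       net_cvg le (fun i => mul a (ee i)) a)
  (M_gt0 : 0 < M) (eM : forall i x, `|mul (ee i) x| <= M * `|x|).

Lemma approx_unit_cvgl b : J b -> (fun i => mul (ee i) b - b) @ tails le --> 0.
Proof.
move=> /e_unit[/(net_cvg_tails dirI) eb_cvg _]; have tailsF := tails_proper dirI.
exact/subr_cvg0.
Qed.

Lemma approx_unit_cvgr b : J b -> (fun i => mul b (ee i) - b) @ tails le --> 0.
Proof.
move=> /e_unit[_ /(net_cvg_tails dirI) be_cvg]; have tailsF := tails_proper dirI.
exact/subr_cvg0.
Qed.

Lemma lmul_defect_cvg0 t a : tens_on setT t -> J a ->
  (fun i => lmul_defect mul t a (ee i)) @ tails le --> 0.
Proof.
move=> t_on Ja; have tailsF := tails_proper dirI.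
pose w i n := mul (t.1 n) (mul (ee i) (mul (t.2 n) a) - mul (t.2 n) a).
have w_le i n : `|w i n| <= (((M + 1) * `|a|) *: tweight t) n.
  change (`|w i n| <= (M + 1) * `|a| * tweight t n).
  have -> : (M + 1) * `|a| * tweight t n = `|t.1 n| * ((M + 1) * (`|t.2 n| * `|a|)).
    by rewrite /tweight; ring.
  apply: le_trans (norm_amul_le mulP _ _) _; apply: ler_wpM2l => //.
  apply: le_trans (ler_normB _ _) _; rewrite mulrDl mul1r.
  apply: lerD; last exact: (norm_amul_le mulP).
  by apply: le_trans (eM _ _) _; rewrite ler_wpM2l ?(ltW M_gt0) // (norm_amul_le mulP).
apply: (cvg_lim_series_dominated w_le); first exact: is_cvg_seriesZ t_on.2.
move=> n; apply: (@cvg0_bounded _ _ _ _ _ _ (mul (t.1 n)) `|t.1 n|).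
  by move=> x; exact: (norm_amul_le mulP).
by apply: approx_unit_cvgl; apply: (ideal_mull JP).
Qed.

Lemma approx_error_cvg0 t a : tens_on setT t -> J a ->
  (fun i => approx_error mul M t a (ee i) : C^o) @ tails le --> 0.
Proof.
move=> t_on Ja; have tailsF := tails_proper dirI.
have comm_cvg : (fun i => mul a (ee i) - mul (ee i) a) @ tails le --> 0.
  have -> : (fun i => mul a (ee i) - mul (ee i) a) =
      (fun i => (mul a (ee i) - a) - (mul (ee i) a - a)).
    by apply/funext => i; rewrite opprB addrA subrK.
  rewrite -(subrr (0 : U)).
  by apply: cvgB; [exact: approx_unit_cvgr | exact: approx_unit_cvgl].
set S := limn (series (tweight t)).
rewrite /approx_error -[X in _ --> X](_ : M * S * `|0 : U| + M * `|0 : U| + `|0 : U| = 0).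
  apply: cvgD; first apply: cvgD.
  - by apply: cvgM; [exact: cvg_cst | exact: cvg_norm].
  - by apply: cvgM; [exact: cvg_cst | apply: cvg_norm; exact: lmul_defect_cvg0].
  - by apply: cvg_norm; apply: approx_unit_cvgl; apply: (ideal_mull JP).
by rewrite normr0 !mulr0 !addr0.
Qed.

End approximate_identity.

Section finite_approximation.
Variables (R : realType) (U : completeNormedModType R[i]) (mul : U -> U -> U).
Local Notation C := R[i].
Local Notation tensU := (@tens C U).
Variables (J : set U) (L : Type) (leL : L -> L -> Prop) (m : L -> tensU).
Variables (I : Type) (le : I -> I -> Prop) (e : I -> U) (M : C).
Hypotheses (mulP : normed_alg_mul mul) (JP : closed_ideal mul J).
Hypotheses (dirL : directed leL) (m_on : forall l, tens_on setT (m l))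
  (m_sym : forall l, teq setT (tflip (m l)) (m l))
  (m_diag : forall a, setT a -> forall eps : C, 0 < eps -> exists l0, forall l, leL l0 l ->
     forall phi, bilin_le1 setT phi ->
       `|tpair phi (tlact mul a (m l)) - tpair phi (tract mul (m l) a)| <= eps)
  (m_pi : forall a, setT a -> net_cvg leL (fun l => mul (tpi mul (m l)) a) a).
Hypotheses (dirI : directed le) (Je : forall i, J (e i))
  (e_unit : forall a, J a -> net_cvg le (fun i => mul (e i) a) a /\
                             net_cvg le (fun i => mul a (e i)) a)
  (M_gt0 : 0 < M) (eM : forall i x, `|mul (e i) x| <= M * `|x|).

Lemma approx_diagonal_on_finite (F : seq U) (eps : C) : 0 < eps -> exists t : tensU,
  [/\ tens_on J t, teq J (tflip t) t &
    forall a, a \in F -> J a ->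
      (forall phi, bilin_le1 J phi ->
         `|tpair phi (tlact mul a t) - tpair phi (tract mul t a)| <= eps) /\
      `|mul (tpi mul t) a - a| < eps].
Proof.
move=> eps_gt0; have eps2_gt0 : 0 < eps / 2 by rewrite divr_gt0.
have M2_gt0 : 0 < M ^+ 2 by rewrite exprn_gt0.
pose l_good l a := (forall psi, bilin_le1 setT psi ->
    `|tpair psi (tlact mul a (m l)) - tpair psi (tract mul (m l) a)| <= eps / 2 / M ^+ 2)
  /\ `|mul (tpi mul (m l)) a - a| < eps / 2.
have tailsL := tails_proper dirL.
have /filter_ex[l lP] : \forall l \near tails leL, forall a, a \in F -> l_good l a.
  apply: near_all_in => a _.
  apply: filterI; first by apply: near_tails; apply: m_diag; rewrite ?divr_gt0.
  by have /cvgrPdistC_lt := net_cvg_tails dirL (@m_pi a Logic.I); apply.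
pose i_good i a := J a -> approx_error mul M (m l) a (e i) < eps / 2.
have tailsI := tails_proper dirI.
have /filter_ex[i iP] : \forall i \near tails le, forall a, a \in F -> i_good i a.
  apply: near_all_in => a _.
  have [Ja|nJa] := pselect (J a); last by apply: nearW => j /nJa.
  move/cvgr0Pnorm_lt: (approx_error_cvg0 mulP JP dirI e_unit M_gt0 eM (m_on l) Ja).
  move=> /(_ _ eps2_gt0); apply: filterS => j small _.
  by rewrite -[X in X < _]ger0_norm // (approx_error_ge0 mul (e j) M_gt0 a (m_on l)).
exists (tlmul2 mul (e i) (m l)); split.
- exact: (tens_on_tlmul2 JP (Je i) (eM i) (m_on l)).
- exact: (teq_tflip_tlmul2 mulP JP (Je i) M_gt0 (eM i) (m_on l) (m_sym l)).
move=> a aF Ja.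
have [diag_le tpi_le] := tlmul2_approx_le mulP JP (Je i) M_gt0 (eM i) (m_on l) Ja.
have [ml_diag ml_tpi] := lP a aF; have err_lt := iP a aF Ja; split.
  move=> phi phiJ; apply: le_trans (diag_le _ phiJ) _; rewrite (splitr eps).
  apply: lerD; first exact: ltW.
  rewrite mulrC -ler_pdivlMr //; apply: ml_diag.
  exact: (bilin_le1_lmul2_form mulP JP (Je i) M_gt0 (eM i) phiJ).
by apply: le_lt_trans tpi_le _; rewrite (splitr eps) ltrD.
Qed.

End finite_approximation.

Theorem proposition3p9 (R : realType) (U : completeNormedModType R[i])
  (mul : U -> U -> U) (J : set U) :
  normed_alg_mul mul ->
  sym_pseudo_amenable mul setT ->
  closed_ideal mul J ->
  forall (I : Type) (le : I -> I -> Prop) (e : I -> U),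
    directed le ->
    (forall i, J (e i)) ->
    (forall a, J a -> net_cvg le (fun i => mul (e i) a) a /\
                      net_cvg le (fun i => mul a (e i)) a) ->
    (exists M : R[i], 1 <= M /\
       forall i a, `|mul (e i) a| <= M * `|a| /\ `|mul a (e i)| <= M * `|a|) ->
  sym_pseudo_amenable mul J.
Proof.
move=> mulP [L [leL [m [dirL m_on m_sym m_diag m_pi]]]] JP I le e dirI Je e_unit.
case=> M [M_ge1 eM]; have M_gt0 : 0 < M := lt_le_trans ltr01 M_ge1.
apply: sym_pseudo_amenable_of_finite => F eps.
exact: (approx_diagonal_on_finite mulP JP dirL m_on m_sym m_diag m_pi dirI Je e_unit M_gt0
  (fun i x => (eM i x).1)).
Qed.
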